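(* Let $(X,d)$ be an injective metric space and let $(x,y,t)\in X\times X\times[0,1]$. For every point $z\in\mathbb{E}_D[(1-t)\delta_x+t\delta_y]$ there exists a reversible conical bicombing $\sigma$ on $X$ such that $\sigma_{xy}(t)=z$. In particular, if $X$ admits only one reversible conical bicombing, then the set $\mathbb{E}_D[(1-t)\delta_x+t\delta_y]$ is a singleton.
   Context: A metric space $X$ is injective if for every metric space $B$, subset $A\subset B$ and 1-Lipschitz map $f\colon A\to X$ there is a 1-Lipschitz extension $B\to X$. For a Radon probability measure $\mu$ on $X$ with finite first moment, $W_1$ denotes the first Wasserstein distance $W_1(\mu,\nu)=\inf_\gamma\int d(x,y)\,d\gamma(x,y)$ over couplings $\gamma$ of $(\mu,\nu)$, and the Doss expectation is $\mathbb{E}_D[\mu]:=\{z\in X: d(z,w)\le W_1(\mu,\delta_w)\text{ for all }w\in X\}$. A bicombing is a map $\sigma\colon X\times X\times[0,1]\to X$ such that each $\sigma_{xy}:=\sigma(x,y,\cdot)$ is a geodesic from $x$ to $y$ ($\sigma_{xy}(0)=x$, $\sigma_{xy}(1)=y$, $d(\sigma_{xy}(s),\sigma_{xy}(t))=|s-t|d(x,y)$); it is conical if $d(\sigma_{xy}(t),\sigma_{x'y'}(t))\le(1-t)d(x,x')+t\,d(y,y')$ for all $x,y,x',y'$, $t$, and reversible if $\sigma_{xy}(t)=\sigma_{yx}(1-t)$. *)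

From HB Require Import structures.
From mathcomp Require Import all_boot all_order all_algebra.
From mathcomp Require Import boolp classical_sets reals.
Set Implicit Arguments. Unset Strict Implicit. Unset Printing Implicit Defensive.
Import Order.TTheory GRing.Theory Num.Theory.
Local Open Scope ring_scope.
Local Open Scope classical_set_scope.

Section Defs.
Variable R : realType.

Definition is_metric (T : Type) (d : T -> T -> R) : Prop :=
  [/\ (forall a b, 0 <= d a b),
      (forall a b, d a b = 0 <-> a = b),
      (forall a b, d a b = d b a) &
      (forall a b c, d a c <= d a b + d b c)].

Definition injective_metric (X : Type) (d : X -> X -> R) : Prop :=
  forall (B : Type) (dB : B -> B -> R), is_metric dB ->
  forall (A : set B) (f : {a : B | A a} -> X),
    (forall a a' : {a : B | A a}, d (f a) (f a') <= dB (proj1_sig a) (proj1_sig a')) ->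
    exists g : B -> X,
      (forall b b', d (g b) (g b') <= dB b b') /\
      (forall a : {a : B | A a}, g (proj1_sig a) = f a).

(* Bicombings: sigma x y t, only values for t in [0,1] are relevant. *)
Definition is_bicombing (X : Type) (d : X -> X -> R) (sigma : X -> X -> R -> X) : Prop :=
  forall x y, sigma x y 0 = x /\ sigma x y 1 = y /\
    (forall s t, 0 <= s <= 1 -> 0 <= t <= 1 ->
       d (sigma x y s) (sigma x y t) = `|s - t| * d x y).

Definition conical (X : Type) (d : X -> X -> R) (sigma : X -> X -> R -> X) : Prop :=
  forall x y x' y' t, 0 <= t <= 1 ->
    d (sigma x y t) (sigma x' y' t) <= (1 - t) * d x x' + t * d y y'.

Definition reversible (X : Type) (sigma : X -> X -> R -> X) : Prop :=
  forall x y t, 0 <= t <= 1 -> sigma x y t = sigma y x (1 - t).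

Definition rev_conical_bicombing (X : Type) (d : X -> X -> R)
  (sigma : X -> X -> R -> X) : Prop :=
  [/\ is_bicombing d sigma, conical d sigma & reversible sigma].

(* X admits exactly one reversible conical bicombing (bicombings being
   identified when they agree on X x X x [0,1]). *)
Definition unique_rev_conical_bicombing (X : Type) (d : X -> X -> R) : Prop :=
  (exists sigma, rev_conical_bicombing d sigma) /\
  (forall s1 s2, rev_conical_bicombing d s1 -> rev_conical_bicombing d s2 ->
     forall x y t, 0 <= t <= 1 -> s1 x y t = s2 x y t).

(* Finitely supported probability measures sum_i a i * delta_(xs i).
   Couplings of such measures are exactly the nonnegative matrices with the
   prescribed marginals. *)
Definition coupling (m n : nat) (a : 'I_m -> R) (b : 'I_n -> R)
  (g : 'I_m -> 'I_n -> R) : Prop :=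
  [/\ (forall i j, 0 <= g i j),
      (forall i, \sum_(j < n) g i j = a i) &
      (forall j, \sum_(i < m) g i j = b j)].

Definition W1 (X : Type) (d : X -> X -> R) (m n : nat)
  (xs : 'I_m -> X) (a : 'I_m -> R) (ys : 'I_n -> X) (b : 'I_n -> R) : R :=
  inf [set c | exists g, coupling a b g /\
        c = \sum_(i < m) \sum_(j < n) g i j * d (xs i) (ys j)].

Definition doss_expectation (X : Type) (d : X -> X -> R) (m : nat)
  (xs : 'I_m -> X) (a : 'I_m -> R) : set X :=
  [set z | forall w : X,
     d z w <= W1 d xs a (fun _ : 'I_1 => w) (fun _ : 'I_1 => 1)].

(* The measure (1-t) delta_x + t delta_y. *)
Definition two_pts (X : Type) (x y : X) : 'I_2 -> X :=
  fun i => if val i == 0%N then x else y.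
Definition two_wts (t : R) : 'I_2 -> R :=
  fun i => if val i == 0%N then 1 - t else t.

End Defs.

(* For z in the Doss expectation, the function h = (1-t) d(x,.) + t d(y,.)
   dominates d(z,.).  In the space of all such "barycentric" functions with
   the sup metric, X embeds isometrically via u |-> d(u,.), and sending
   d(u,.) to u and h to z is 1-Lipschitz.  Injectivity extends this to a
   1-Lipschitz retraction g, and sigma_xy(s) := g((1-s) d(x,.) + s d(y,.)) is
   a reversible conical bicombing through z, since the barycentric functions
   themselves depend on (x, y, s) in a conical and reversible way. *)
From HB Require Import structures.
From mathcomp Require Import all_boot all_order all_algebra.
From mathcomp Require Import boolp classical_sets reals.
From mathcomp Require Import ring lra.
Import Order.TTheory GRing.Theory Num.Theory.
Local Open Scope ring_scope.
Local Open Scope classical_set_scope.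

Section MetricFacts.
Context {R : realType} {T : Type} {dist : T -> T -> R}.
Hypothesis hdist : is_metric dist.

Lemma metric_ge0 a b : 0 <= dist a b. Proof. by case: hdist. Qed.
Lemma metric_eq0 a b : dist a b = 0 <-> a = b. Proof. by case: hdist. Qed.
Lemma metricC a b : dist a b = dist b a. Proof. by case: hdist. Qed.
Lemma metric_triangle a b c : dist a c <= dist a b + dist b c.
Proof. by case: hdist. Qed.
Lemma metricxx a : dist a a = 0. Proof. exact/metric_eq0. Qed.

Lemma metric_le0_eq a b : dist a b <= 0 -> a = b.
Proof. by move=> le0; apply/metric_eq0/le_anti; rewrite le0 metric_ge0. Qed.

Lemma metric_distB a b w : `|dist a w - dist b w| <= dist a b.
Proof.
rewrite ler_norml; have := metric_triangle a b w; have := metric_triangle b a w.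
rewrite (metricC b a); lra.
Qed.

(* The reverse inequality follows from the triangle inequality along
   x = p 0, p s, p t, p 1 = y. *)
Lemma lipschitz_path_geodesic (p : R -> T) (x y : T) :
    p 0 = x -> p 1 = y ->
    (forall s t, dist (p s) (p t) <= `|s - t| * dist x y) ->
  forall s t, 0 <= s <= 1 -> 0 <= t <= 1 ->
    dist (p s) (p t) = `|s - t| * dist x y.
Proof.
move=> p0 p1 lip s t s01 t01; apply/le_anti; rewrite lip /=.
wlog st : s t s01 t01 / s <= t.
  move=> W; case: (leP s t) => [|/ltW ts]; first exact: W.
  by rewrite [dist (p s) _]metricC distrC; apply: W.
move: s01 t01 => /andP[s0 _] /andP[_ t1].
have := lip 0 s; have := lip t 1; rewrite p0 p1 sub0r normrN.
rewrite (ger0_norm s0) !ler0_norm ?subr_le0 //.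
have := metric_triangle x (p s) y; have := metric_triangle (p s) (p t) y.
have := metric_ge0 x y; nra.
Qed.

End MetricFacts.

Lemma injective_metric_extend_rel {R : realType} {X : Type} {d : X -> X -> R}
    (hd : is_metric d) (hinj : injective_metric d)
    {B : Type} {dB : B -> B -> R} (hdB : is_metric dB) {rel : B -> X -> Prop} :
    (forall b b' u u', rel b u -> rel b' u' -> d u u' <= dB b b') ->
  exists g : B -> X,
    (forall b b', d (g b) (g b') <= dB b b') /\ (forall b u, rel b u -> g b = u).
Proof.
(* Functionality of [rel] is not assumed: it follows from the bound, as dB b b = 0. *)
move=> rel_lip; pose A b := exists u, rel b u.
pose f (a : {b | A b}) : X := proj1_sig (cid (proj2_sig a)).
have frel a : rel (proj1_sig a) (f a) by rewrite /f; case: cid.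
have [g [g_lip gE]] := hinj B dB hdB A f (fun a a' => rel_lip _ _ _ _ (frel a) (frel a')).
exists g; split=> // b u bu; have Ab : A b by exists u.
rewrite (gE (exist A b Ab)); apply: (metric_le0_eq hd).
by rewrite -(metricxx hdB b); exact: rel_lip (frel (exist A b Ab)) bu.
Qed.

Section SupDistance.
Context {R : realType} {T : Type} {P : (T -> R) -> Prop}.
Hypothesis P_bounded :
  forall f g, P f -> P g -> exists M, forall w, `|f w - g w| <= M.
Variable w0 : T.

Definition sup_dist (f g : {f | P f}) : R :=
  sup (range (fun w => `|proj1_sig f w - proj1_sig g w|)).

Lemma sup_dist_ge f g w : `|proj1_sig f w - proj1_sig g w| <= sup_dist f g.
Proof.
have [M fgM] := P_bounded _ _ (proj2_sig f) (proj2_sig g).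
apply: sup_upper_bound; last by exists w.
by split; [exists `|proj1_sig f w - proj1_sig g w|, w | exists M => _ [w' _ <-]].
Qed.

Lemma sup_dist_le f g M :
  (forall w, `|proj1_sig f w - proj1_sig g w| <= M) -> sup_dist f g <= M.
Proof.
move=> fgM; apply: ge_sup => [|_ [w _ <-]] //.
by exists `|proj1_sig f w0 - proj1_sig g w0|, w0.
Qed.

Lemma sup_dist_metric : is_metric sup_dist.
Proof.
have ge0 f g : 0 <= sup_dist f g := le_trans (normr_ge0 _) (sup_dist_ge f g w0).
split=> // [f g|f g|f g h].
- split=> [fg0|<-]; last first.
    by apply/le_anti; rewrite ge0 andbT sup_dist_le // => w; rewrite subrr normr0.
  case: f g fg0 => f Pf [g Pg] /= fg0; apply: eq_exist; apply: funext => w.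
  apply/eqP; rewrite -subr_eq0 -normr_le0 -fg0.
  exact: (sup_dist_ge (exist P f Pf) (exist P g Pg)).
- by apply/le_anti; rewrite !sup_dist_le // => w; rewrite distrC sup_dist_ge.
- apply: sup_dist_le => w; rewrite -(subrKA (proj1_sig g w)).
  by apply: le_trans (ler_normD _ _) _; rewrite lerD ?sup_dist_ge.
Qed.

End SupDistance.

Section Barycentric.
Context {R : realType} {X : Type}.
Variable d : X -> X -> R.
Hypothesis hd : is_metric d.

Definition bary (x y : X) (t : R) : X -> R := fun w => (1 - t) * d x w + t * d y w.

Definition is_bary (f : X -> R) : Prop := exists x y t, f = bary x y t.

Definition bary_point (x y : X) (t : R) : {f | is_bary f} :=
  exist is_bary (bary x y t) (ex_intro _ x (ex_intro _ y (ex_intro _ t erefl))).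

Lemma bary0 x y : bary x y 0 = d x.
Proof. by apply: funext => w; rewrite /bary; ring. Qed.

Lemma bary1 x y : bary x y 1 = d y.
Proof. by apply: funext => w; rewrite /bary; ring. Qed.

Lemma baryC x y t : bary x y t = bary y x (1 - t).
Proof. by apply: funext => w; rewrite /bary; ring. Qed.

Lemma bary_lipschitz_time x y s t w :
  `|bary x y s w - bary x y t w| <= `|s - t| * d x y.
Proof.
have -> : bary x y s w - bary x y t w = (s - t) * (d y w - d x w).
  by rewrite /bary; ring.
by rewrite normrM ler_wpM2l // -(metricC hd y x) metric_distB.
Qed.

Lemma bary_conical x y x' y' t w : 0 <= t <= 1 ->
  `|bary x y t w - bary x' y' t w| <= (1 - t) * d x x' + t * d y y'.
Proof.
case/andP=> t0 t1.
have -> : bary x y t w - bary x' y' t w =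
    (1 - t) * (d x w - d x' w) + t * (d y w - d y' w) by rewrite /bary; ring.
apply: le_trans (ler_normD _ _) _; rewrite !normrM (ger0_norm t0) ger0_norm ?subr_ge0 //.
by apply: lerD; apply: ler_wpM2l; rewrite ?subr_ge0 ?metric_distB.
Qed.

Lemma bary_bounded f g : is_bary f -> is_bary g ->
  exists M, forall w, `|f w - g w| <= M.
Proof.
move=> [x [y [t ->]]] [x' [y' [t' ->]]].
exists (`|t| * d x y + d x x' + `|t'| * d x' y') => w.
have := bary_lipschitz_time x y t 0 w; have := bary_lipschitz_time x' y' t' 0 w.
rewrite !subr0 !bary0 => h' h; have hxx' := metric_distB hd x x' w.
have -> : bary x y t w - bary x' y' t' w =
  (bary x y t w - d x w) + (d x w - d x' w) - (bary x' y' t' w - d x' w) by ring.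
apply: le_trans (ler_normB _ _) _; apply: lerD => //.
by apply: le_trans (ler_normD _ _) _; apply: lerD.
Qed.

Local Notation bary_dist := (sup_dist (P := is_bary)).

Lemma dist_le_bary_dist b b' u u' : proj1_sig b = d u -> proj1_sig b' = d u' ->
  d u u' <= bary_dist b b'.
Proof.
move=> bu b'u'; apply: le_trans (sup_dist_ge bary_bounded b b' u').
by rewrite bu b'u' metricxx // subr0 ler_norm.
Qed.

Lemma rev_conical_bicombing_of_retraction (g : {f | is_bary f} -> X) :
    (forall b b', d (g b) (g b') <= bary_dist b b') ->
    (forall b u, proj1_sig b = d u -> g b = u) ->
  rev_conical_bicombing d (fun x y t => g (bary_point x y t)).
Proof.
move=> g_lip gE; split.
- move=> x y; have s0 : g (bary_point x y 0) = x by apply: gE; rewrite /= bary0.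
  have s1 : g (bary_point x y 1) = y by apply: gE; rewrite /= bary1.
  do 2!split=> //; apply: lipschitz_path_geodesic => // s t.
  apply: le_trans (g_lip _ _) _; apply: (sup_dist_le x) => w.
  exact: bary_lipschitz_time.
- move=> x y x' y' t t01; apply: le_trans (g_lip _ _) _.
  by apply: (sup_dist_le x) => w; apply: bary_conical.
- by move=> x y t _; congr g; apply: eq_exist; rewrite baryC.
Qed.

Lemma rev_conical_bicombing_through (hinj : injective_metric d) x y t z :
    (forall w, d z w <= bary x y t w) ->
  exists sigma, rev_conical_bicombing d sigma /\ sigma x y t = z.
Proof.
move=> zh; pose h := bary_point x y t.
have hdB := sup_dist_metric bary_bounded x.
pose rel b u := proj1_sig b = d u \/ b = h /\ u = z.
have z_dist u b : proj1_sig b = d u -> d z u <= bary_dist h b.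
  move=> bu; apply: le_trans (zh u) (le_trans _ (sup_dist_ge bary_bounded h b u)).
  by rewrite bu metricxx // subr0 ler_norm.
have rel_lip b b' u u' : rel b u -> rel b' u' -> d u u' <= bary_dist b b'.
  case=> [bu|[-> ->]] [b'u'|[-> ->]].
  - exact: dist_le_bary_dist.
  - by rewrite (metricC hd) (metricC hdB) z_dist.
  - exact: z_dist.
  - by rewrite (metricxx hd) (metric_ge0 hdB).
have [g [g_lip gE]] := injective_metric_extend_rel hd hinj hdB rel_lip.
exists (fun x y t => g (bary_point x y t)); split; last exact: gE (or_intror _).
by apply: rev_conical_bicombing_of_retraction => // b u bu; apply: gE; left.
Qed.

Lemma bicombing_diag {sigma t} w : is_bicombing d sigma -> 0 <= t <= 1 ->
  sigma w w t = w.
Proof.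
move=> /(_ w w) [s0 [_ sdist]] t01.
have := sdist t 0 t01; rewrite s0 metricxx // mulr0 => dist0.
by apply/(metric_eq0 hd)/dist0; rewrite lexx ler01.
Qed.

Lemma conical_bicombing_le_bary sigma x y t w :
    is_bicombing d sigma -> conical d sigma -> 0 <= t <= 1 ->
  d (sigma x y t) w <= bary x y t w.
Proof.
move=> sb sc t01; rewrite -{1}(bicombing_diag w sb t01); exact: sc.
Qed.

End Barycentric.

Lemma W1_two_pts_dirac (R : realType) (X : Type) (d : X -> X -> R) x y t w :
    0 <= t <= 1 ->
  W1 d (two_pts x y) (two_wts t) (fun _ : 'I_1 => w) (fun _ : 'I_1 => 1) =
    bary d x y t w.
Proof.
case/andP=> t0 t1; rewrite /W1 -[RHS]inf1; congr inf.
apply/seteqP; split => c /=.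
- move=> [g [[_ gr _] ->]]; rewrite !big_ord_recl !big_ord0 !addr0.
  have := gr ord0; have := gr (lift ord0 ord0).
  by rewrite !big_ord_recl !big_ord0 !addr0 => -> ->.
- move=> ->; exists (fun i _ => two_wts t i); split; last first.
    by rewrite !big_ord_recl !big_ord0 /= !addr0.
  split=> [i _|i|j]; rewrite ?big_ord_recl ?big_ord0 ?addr0 /two_wts //=; last by ring.
  by case: ifP => _; lra.
Qed.

Lemma doss_two_ptsE (R : realType) (X : Type) (d : X -> X -> R) x y t :
    0 <= t <= 1 ->
  doss_expectation d (two_pts x y) (two_wts t) =
    [set z | forall w, d z w <= bary d x y t w].
Proof.
by move=> t01; apply/seteqP; split=> z zw w; move: (zw w); rewrite W1_two_pts_dirac.
Qed.

Theorem lemma3p4 (R : realType) (X : Type) (d : X -> X -> R)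
  (hd : is_metric d) (hinj : injective_metric d)
  (x y : X) (t : R) (ht : 0 <= t <= 1) :
  (forall z : X, doss_expectation d (two_pts x y) (two_wts t) z ->
     exists sigma : X -> X -> R -> X,
       rev_conical_bicombing d sigma /\ sigma x y t = z) /\
  (unique_rev_conical_bicombing d ->
     exists z0 : X, doss_expectation d (two_pts x y) (two_wts t) = [set z0]).
Proof.
rewrite doss_two_ptsE //; have through := rev_conical_bicombing_through d hd hinj x y t.
split=> // -[[sigma s_rev] uniq]; exists (sigma x y t).
apply/seteqP; split=> [z /through [sigma' [s'_rev <-]]|_ -> w] /=.
- exact: uniq.
- by case: s_rev => sb sc _; apply: conical_bicombing_le_bary.
Qed.
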